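(* Let $C>0$. There exist $K,\varepsilon_0>0$ such that for all $0<\varepsilon<\varepsilon_0$, all $0<\zeta\le C\varepsilon^{3q-1}$ and all $s\ge0$, $$\inf\Big\{L(\nu)\ :\ \nu\in{\rm AC}([0,1],\mathbb{R}^2),\ \nu(0)=(0,-s),\ \nu(1)=(\varepsilon^q,\varepsilon),\ \nu([0,1])\subset D_\zeta\Big\}\ \ge\ L_{\rm SR}(\gamma_{s,\varepsilon})-K\zeta^{1-\frac1b}.$$
   Context: Fix an odd integer $b\geq5$, $q=b/2$. $L(\cdot)$ is the Euclidean length of plane curves. Let $P(x_1,x_2)=x_1^2-x_2^b$, and $\widetilde P(x_1,x_2)=P(x_1,x_2)$ if $x_2\ge0$, $\widetilde P(x_1,x_2)=x_1^2$ if $x_2<0$. For $\zeta>0$, $D_\zeta=\{x\in\mathbb{R}^2: x_1\ge0,\ \widetilde P(x)\le\zeta\}$. Let $\gamma(t)=(0,t,\tfrac{t^{2b+1}}{2b+1})$ for $t<0$ and $\gamma(t)=(t^q,t,0)$ for $t\ge0$, $\gamma_{s,\varepsilon}=\gamma|_{[-s,\varepsilon]}$; its sub-Riemannian length equals the Euclidean length of its projection to the first two coordinates, i.e. $L_{\rm SR}(\gamma_{s,\varepsilon})=s+\int_0^\varepsilon\sqrt{1+q^2t^{2q-2}}\,dt$. *)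

From Stdlib Require Import Reals.
From Coquelicot Require Import Coquelicot.
Open Scope R_scope.

Definition dist2 (x y : R * R) : R :=
  sqrt ((fst x - fst y) ^ 2 + (snd x - snd y) ^ 2).

Fixpoint sumn_R (n : nat) (f : nat -> R) : R :=
  match n with
  | O => 0
  | S m => sumn_R m f + f m
  end.

(* Absolute continuity of nu : [0,1] -> R^2 (classical epsilon-delta
   definition with finite families of non-overlapping subintervals). *)
Definition abs_cont01 (nu : R -> R * R) : Prop :=
  forall eps, 0 < eps -> exists delta, 0 < delta /\
    forall (n : nat) (a b : nat -> R),
      (forall i, (i < n)%nat -> 0 <= a i /\ a i <= b i /\ b i <= 1) ->
      (forall i, (S i < n)%nat -> b i <= a (S i)) ->
      sumn_R n (fun i => b i - a i) < delta ->
      sumn_R n (fun i => dist2 (nu (b i)) (nu (a i))) < eps.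

Definition inscribed_length (nu : R -> R * R) (l : R) : Prop :=
  exists (n : nat) (t : nat -> R),
    t O = 0 /\ t n = 1 /\ (forall i, (i < n)%nat -> t i <= t (S i)) /\
    l = sumn_R n (fun i => dist2 (nu (t (S i))) (nu (t i))).

Definition curve_length (nu : R -> R * R) : Rbar :=
  Lub_Rbar (inscribed_length nu).

Definition Pt (b : nat) (x : R * R) : R :=
  if Rle_dec 0 (snd x) then fst x ^ 2 - snd x ^ b else fst x ^ 2.

Definition Dz (b : nat) (zeta : R) (x : R * R) : Prop :=
  0 <= fst x /\ Pt b x <= zeta.

(* L_SR(gamma_{s,eps}) = s + int_0^eps sqrt(1 + q^2 t^(2q-2)) dt, q = b/2;
   note 2q - 2 = b - 2 is a natural number. *)
Definition LSR (b : nat) (s eps : R) : R :=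
  let q := INR b / 2 in
  s + RInt (fun t => sqrt (1 + q ^ 2 * t ^ (b - 2))) 0 eps.

From Stdlib Require Import Reals Lra Psatz Lia.
From Coquelicot Require Import Coquelicot.
Open Scope R_scope.

(* Write b = e + 2 and eps = th^2, and sample nu at increasing times where its
   height equals (k th / N)^2 (intermediate value theorem).
   The inscribed polygon has a first side of length at least s, and each
   further chord is bounded below by the tangent-line (Cauchy-Schwarz)
   estimate taken at the slope of the model curve x1 = x2^(b/2) of gamma.
   A point of D_zeta lies left of the edge x1 = sqrt(x2^b + zeta), so the
   deviation from the model curve splits into the gap between edge and model
   curve, whose weighted total decrease is O(zeta^(1 - 1/b)), and a nonnegative
   slack, whose contribution summation by parts bounds by the final slack
   times the final slope, at most q zeta / eps; the hypothesis zeta <= C eps^(3q - 1) makes this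
   O(zeta^(1 - 1/b)) as well.  The main terms form a lower Riemann sum of
   L_SR, and the mesh is taken fine enough for the discretisation error to be
   O(zeta^(1 - 1/b)) too. *)

Lemma sumn_R_ext n f g :
  (forall i, (i < n)%nat -> f i = g i) -> sumn_R n f = sumn_R n g.
Proof.
  induction n as [|n IH]; intros Hfg; simpl; [reflexivity|].
  rewrite IH, Hfg; auto with arith.
Qed.

Lemma sumn_R_le n f g :
  (forall i, (i < n)%nat -> f i <= g i) -> sumn_R n f <= sumn_R n g.
Proof.
  induction n as [|n IH]; intros Hfg; simpl; [lra|].
  apply Rplus_le_compat; [apply IH; auto with arith | apply Hfg; lia].
Qed.

Lemma sumn_R_plus n f g : sumn_R n (fun i => f i + g i) = sumn_R n f + sumn_R n g.
Proof. induction n as [|n IH]; simpl; [lra|]. rewrite IH; ring. Qed.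

Lemma sumn_R_minus n f g : sumn_R n (fun i => f i - g i) = sumn_R n f - sumn_R n g.
Proof. induction n as [|n IH]; simpl; [lra|]. rewrite IH; ring. Qed.

Lemma sumn_R_scal n c f : sumn_R n (fun i => c * f i) = c * sumn_R n f.
Proof. induction n as [|n IH]; simpl; [lra|]. rewrite IH; ring. Qed.

Lemma sumn_R_telescope n u : sumn_R n (fun i => u (S i) - u i) = u n - u O.
Proof. induction n as [|n IH]; simpl; [lra|]. rewrite IH; ring. Qed.

Lemma sumn_R_shift n f : sumn_R (S n) f = f O + sumn_R n (fun i => f (S i)).
Proof. induction n as [|n IH]; simpl in *; [lra|]. rewrite IH; ring. Qed.

Lemma sumn_R_abel_ge m (sg r : nat -> R) :
  (forall k, (k <= m)%nat -> 0 <= sg k) ->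
  (forall k, (k < m)%nat -> sg k <= sg (S k)) ->
  (forall k, (k <= S m)%nat -> 0 <= r k) ->
  - (sg m * r (S m)) <= sumn_R (S m) (fun k => sg k * (r k - r (S k))).
Proof.
  induction m as [|m IH]; intros Hsg Hmono Hr.
  - simpl. assert (0 <= sg O) by (apply Hsg; lia).
    assert (0 <= r O) by (apply Hr; lia). nra.
  - change (sumn_R (S (S m)) (fun k => sg k * (r k - r (S k)))) with
      (sumn_R (S m) (fun k => sg k * (r k - r (S k))) + sg (S m) * (r (S m) - r (S (S m)))).
    assert (IHm : - (sg m * r (S m)) <= sumn_R (S m) (fun k => sg k * (r k - r (S k))))
      by (apply IH; intros; [apply Hsg | apply Hmono | apply Hr]; lia).
    assert (sg m <= sg (S m)) by (apply Hmono; lia).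
    assert (0 <= r (S m)) by (apply Hr; lia). nra.
Qed.

Lemma pow_sub_le_mean n s t :
  0 <= s <= t -> t ^ S n - s ^ S n <= INR (S n) * t ^ n * (t - s).
Proof.
  intros Hst. induction n as [|n IH]; [simpl; lra|].
  assert (0 <= s ^ S n <= t ^ S n) by (split; [apply pow_le | apply pow_incr]; lra).
  replace (t ^ S (S n) - s ^ S (S n)) with (t * (t ^ S n - s ^ S n) + s ^ S n * (t - s))
    by (simpl; ring).
  rewrite S_INR. simpl in *. nra.
Qed.

(* The secant slope of [u |-> u^(e/2+1)] between [t^2] and [T^2] lies between the
   derivatives at the endpoints; the induction steps from [e] to [e+2] using
   [T^(e+4) - t^(e+4) = T^2 (T^(e+2) - t^(e+2)) + t^(e+2) (T^2 - t^2)] and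
   its mirror image. *)
Lemma pow_secant_bounds e t T : 0 <= t <= T ->
  INR (e + 2) * t ^ e * (T ^ 2 - t ^ 2) <= 2 * (T ^ (e + 2) - t ^ (e + 2)) <=
  INR (e + 2) * T ^ e * (T ^ 2 - t ^ 2).
Proof.
  intros Ht.
  assert (Hsq : 0 <= t ^ 2 <= T ^ 2) by (split; [apply pow_le | apply pow_incr]; lra).
  assert (Hstep : forall e, INR (e + 2) * t ^ e * (T ^ 2 - t ^ 2) <= 2 * (T ^ (e + 2) - t ^ (e + 2)) <=
      INR (e + 2) * T ^ e * (T ^ 2 - t ^ 2) ->
    INR (e + 4) * t ^ (e + 2) * (T ^ 2 - t ^ 2) <= 2 * (T ^ (e + 4) - t ^ (e + 4)) <=
      INR (e + 4) * T ^ (e + 2) * (T ^ 2 - t ^ 2)).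
  { clear e. intros e [Hlo Hhi].
    assert (0 <= t ^ e <= T ^ e) by (split; [apply pow_le | apply pow_incr]; lra).
    assert (0 <= INR e) by apply pos_INR.
    replace (INR (e + 4)) with (INR (e + 2) + 2) by (rewrite !plus_INR; simpl; ring).
    replace (e + 4)%nat with (e + 2 + 2)%nat by lia.
    rewrite !(pow_add _ (e + 2) 2), !(pow_add _ e 2) in *.
    set (n := INR (e + 2)) in *. assert (0 <= n) by apply pos_INR.
    assert (0 <= n * t ^ e * (T ^ 2 - t ^ 2)) by (apply Rmult_le_pos; [apply Rmult_le_pos|]; lra).
    assert (0 <= n * T ^ e * (T ^ 2 - t ^ 2)) by (apply Rmult_le_pos; [apply Rmult_le_pos|]; lra).
    split.
    - assert (T ^ 2 * (n * t ^ e * (T ^ 2 - t ^ 2)) <= T ^ 2 * (2 * (T ^ e * T ^ 2 - t ^ e * t ^ 2)))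
        by (apply Rmult_le_compat_l; lra).
      assert (t ^ 2 * (n * t ^ e * (T ^ 2 - t ^ 2)) <= T ^ 2 * (n * t ^ e * (T ^ 2 - t ^ 2)))
        by (apply Rmult_le_compat_r; lra).
      nra.
    - assert (t ^ 2 * (2 * (T ^ e * T ^ 2 - t ^ e * t ^ 2)) <= t ^ 2 * (n * T ^ e * (T ^ 2 - t ^ 2)))
        by (apply Rmult_le_compat_l; lra).
      assert (t ^ 2 * (n * T ^ e * (T ^ 2 - t ^ 2)) <= T ^ 2 * (n * T ^ e * (T ^ 2 - t ^ 2)))
        by (apply Rmult_le_compat_r; lra).
      nra. }
  enough (Hpair : forall e, (INR (e + 2) * t ^ e * (T ^ 2 - t ^ 2) <= 2 * (T ^ (e + 2) - t ^ (e + 2)) <=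
      INR (e + 2) * T ^ e * (T ^ 2 - t ^ 2)) /\
    (INR (S e + 2) * t ^ S e * (T ^ 2 - t ^ 2) <= 2 * (T ^ (S e + 2) - t ^ (S e + 2)) <=
      INR (S e + 2) * T ^ S e * (T ^ 2 - t ^ 2))) by apply Hpair.
  clear e. induction e as [|e IH].
  - simpl. split; [split; nra|].
    assert (0 <= (T - t) * (T - t) * (2 * T + t)) by (apply Rmult_le_pos; nra).
    assert (0 <= (T - t) * (T - t) * (T + 2 * t)) by (apply Rmult_le_pos; nra).
    split; nra.
  - split; [apply IH|].
    replace (S (S e)) with (e + 2)%nat by lia. replace (e + 2 + 2)%nat with (e + 4)%nat by lia.
    apply Hstep, IH.
Qed.

Lemma sqrt_ge_tangent U X d :
  U * sqrt (1 + d ^ 2) + sin (atan d) * (X - d * U) <= sqrt (X ^ 2 + U ^ 2).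
Proof.
  rewrite sin_atan. unfold Rsqr.
  assert (Hl : 0 < sqrt (1 + d ^ 2)) by (apply sqrt_lt_R0; nra).
  assert (Hll : sqrt (1 + d ^ 2) * sqrt (1 + d ^ 2) = 1 + d ^ 2) by (apply sqrt_sqrt; nra).
  replace (d * d) with (d ^ 2) by ring.
  replace (U * sqrt (1 + d ^ 2)) with (U * (sqrt (1 + d ^ 2) * sqrt (1 + d ^ 2)) / sqrt (1 + d ^ 2))
    by (field; lra).
  rewrite Hll.
  replace (U * (1 + d ^ 2) / sqrt (1 + d ^ 2) + d / sqrt (1 + d ^ 2) * (X - d * U))
    with ((U + d * X) / sqrt (1 + d ^ 2)) by (field; lra).
  apply (Rmult_le_reg_r (sqrt (1 + d ^ 2))); [exact Hl|].
  unfold Rdiv. rewrite Rmult_assoc, Rinv_l, Rmult_1_r by lra.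
  rewrite <- sqrt_mult by nra.
  (* Cauchy-Schwarz in the plane. *)
  apply Rle_trans with (Rabs (U + d * X)); [apply Rle_abs|].
  rewrite <- sqrt_Rsqr_abs. apply sqrt_le_1_alt. unfold Rsqr.
  assert (0 <= (X - d * U) ^ 2) by apply pow2_ge_0. nra.
Qed.

Lemma sin_atan_bounds d : 0 <= d -> 0 <= sin (atan d) <= d.
Proof.
  intros Hd. rewrite sin_atan. unfold Rsqr.
  assert (H1 : 1 <= sqrt (1 + d * d)).
  { rewrite <- sqrt_1 at 1. apply sqrt_le_1_alt. nra. }
  split; [apply Rdiv_le_0_compat; lra|].
  apply (Rmult_le_reg_r (sqrt (1 + d * d))); [lra|].
  unfold Rdiv. rewrite Rmult_assoc, Rinv_l, Rmult_1_r by lra. nra.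
Qed.

Lemma sin_atan_le d d' : d <= d' -> sin (atan d) <= sin (atan d').
Proof.
  intros Hd. destruct (atan_bound d), (atan_bound d').
  apply sin_incr_1; try lra.
  destruct (Rle_lt_or_eq_dec _ _ Hd) as [Hlt | ->]; [apply Rlt_le, atan_increasing|]; lra.
Qed.

(* With [zeta = (r^b)^2], [edge b r x] is the largest first coordinate of a point
   of [D_zeta] at height [x^2], and [gap b r x] its distance to the curve
   [x1 = x2^(b/2)] followed by [gamma]. *)
Definition edge (b : nat) (r x : R) : R := sqrt ((x ^ b) ^ 2 + (r ^ b) ^ 2).
Definition gap (b : nat) (r x : R) : R := edge b r x - x ^ b.

Section Gap.
Variables (b : nat) (r : R).
Hypothesis r_pos : 0 < r.

Lemma edge_facts x : 0 <= x ->
  x ^ b <= edge b r x /\ r ^ b <= edge b r x /\ edge b r x * edge b r x = (x ^ b) ^ 2 + (r ^ b) ^ 2.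
Proof.
  intros Hx. unfold edge.
  assert (0 <= x ^ b) by (apply pow_le; lra). assert (0 < r ^ b) by (apply pow_lt; lra).
  assert (Hsq : sqrt ((x ^ b) ^ 2 + (r ^ b) ^ 2) * sqrt ((x ^ b) ^ 2 + (r ^ b) ^ 2)
                = (x ^ b) ^ 2 + (r ^ b) ^ 2) by (apply sqrt_sqrt; nra).
  assert (0 <= sqrt ((x ^ b) ^ 2 + (r ^ b) ^ 2)) by apply sqrt_pos.
  repeat split; nra.
Qed.

Lemma edge_le x y : 0 <= x <= y -> edge b r x <= edge b r y.
Proof.
  intros Hxy. unfold edge. apply sqrt_le_1_alt.
  assert (0 <= x ^ b <= y ^ b) by (split; [apply pow_le | apply pow_incr]; lra).
  assert ((x ^ b) ^ 2 <= (y ^ b) ^ 2) by (apply pow_incr; lra). lra.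
Qed.

Lemma gap_mul x : 0 <= x -> gap b r x * (edge b r x + x ^ b) = (r ^ b) ^ 2.
Proof. intros Hx. unfold gap. destruct (edge_facts x Hx) as [_ [_ Hsq]]. nra. Qed.

Lemma gap_bounds x : 0 <= x -> 0 <= gap b r x <= r ^ b.
Proof.
  intros Hx. assert (Hmul := gap_mul x Hx). destruct (edge_facts x Hx) as [H1 [H2 _]].
  assert (0 <= x ^ b) by (apply pow_le; lra). assert (0 < r ^ b) by (apply pow_lt; lra).
  assert (0 <= gap b r x) by (unfold gap; lra). nra.
Qed.

Lemma gap_le x y : 0 <= x <= y -> gap b r y <= gap b r x.
Proof.
  intros Hxy.
  assert (0 <= x ^ b <= y ^ b) by (split; [apply pow_le | apply pow_incr]; lra).
  assert (edge b r x <= edge b r y) by (apply edge_le; lra).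
  assert (Hx := gap_mul x ltac:(lra)). assert (Hy := gap_mul y ltac:(lra)).
  destruct (gap_bounds x) as [Hgx _]; [lra|]. destruct (gap_bounds y) as [Hgy _]; [lra|].
  destruct (edge_facts x) as [_ [Hrx _]]; [lra|]. assert (0 < r ^ b) by (apply pow_lt; lra).
  nra.
Qed.

Lemma gap_sub_le x y : 0 <= x <= y -> gap b r x - gap b r y <= y ^ b - x ^ b.
Proof. intros Hxy. unfold gap. assert (edge b r x <= edge b r y) by (apply edge_le; lra). lra. Qed.

End Gap.

Section GapDecrease.
Variables (e : nat) (r : R).
Hypothesis r_pos : 0 < r.

Lemma pow_mul_le_edge x : 0 <= x -> x ^ e * (x ^ 2 + r ^ 2) <= 2 * edge (e + 2) r x.
Proof.
  intros Hx. destruct (edge_facts (e + 2) r r_pos x Hx) as [Hxb [Hrb _]].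
  rewrite !pow_add in Hxb, Hrb.
  assert (0 <= x ^ e) by (apply pow_le; lra).
  destruct (Rle_dec r x).
  - assert (r ^ 2 <= x ^ 2) by (apply pow_incr; lra). nra.
  - assert (x ^ e <= r ^ e) by (apply pow_incr; lra).
    assert (x ^ 2 <= r ^ 2) by (apply pow_incr; lra).
    assert (0 <= x ^ 2) by (apply pow_le; lra). nra.
Qed.

Lemma gap_sub_mul_edge_le s t : 0 <= s <= t ->
  (gap (e + 2) r s - gap (e + 2) r t) * edge (e + 2) r t
  <= 2 * gap (e + 2) r s * (t ^ (e + 2) - s ^ (e + 2)).
Proof.
  intros Hst. set (b := (e + 2)%nat).
  assert (Hms := gap_mul b r r_pos s ltac:(lra)). assert (Hmt := gap_mul b r r_pos t ltac:(lra)).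
  assert (Hdec := gap_le b r r_pos s t Hst).
  destruct (gap_bounds b r r_pos s) as [Hhs _]; [lra|].
  destruct (gap_bounds b r r_pos t) as [Hht _]; [lra|].
  assert (0 <= s ^ b <= t ^ b) by (split; [apply pow_le | apply pow_incr]; lra).
  assert (0 <= edge b r s) by apply sqrt_pos.
  unfold gap in *. set (Ss := edge b r s) in *. set (St := edge b r t) in *.
  (* Both products [gap * (edge + x^b)] equal [(r^b)^2]. *)
  assert (Hid : ((Ss - s ^ b) - (St - t ^ b)) * (St + Ss)
              = (t ^ b - s ^ b) * ((St - t ^ b) + (Ss - s ^ b))) by nra.
  nra.
Qed.

Lemma gap_sub_mul_le s t : 0 <= s <= t ->
  (gap (e + 2) r s - gap (e + 2) r t) * (t ^ 2 + r ^ 2)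
  <= 4 * INR (e + 2) * gap (e + 2) r s * (t ^ 2 - s ^ 2).
Proof.
  intros Hst. set (b := (e + 2)%nat).
  assert (H1 := gap_sub_mul_edge_le s t Hst). fold b in H1.
  assert (H2 := pow_mul_le_edge t ltac:(lra)). fold b in H2.
  destruct (edge_facts b r r_pos t) as [_ [Hrt _]]; [lra|].
  assert (0 < r ^ b) by (apply pow_lt; lra).
  destruct (gap_bounds b r r_pos s) as [Hhs _]; [lra|].
  assert (Hdec := gap_le b r r_pos s t Hst).
  assert (Hmean : t ^ b - s ^ b <= INR b * t ^ e * (t ^ 2 - s ^ 2)).
  { assert (Hpow := pow_sub_le_mean (S e) s t Hst).
    replace (S (S e)) with b in Hpow by (unfold b; lia).
    assert (t ^ S e * (t - s) <= t ^ e * (t ^ 2 - s ^ 2)).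
    { replace (t ^ S e) with (t ^ e * t) by (simpl; ring).
      assert (0 <= t ^ e * ((t - s) * s)) by (apply Rmult_le_pos; [apply pow_le|]; nra). nra. }
    assert (0 <= INR b) by apply pos_INR. nra. }
  assert (0 <= INR b) by apply pos_INR. assert (0 <= t ^ 2 - s ^ 2) by nra.
  set (St := edge b r t) in *. set (hs := gap b r s) in *. set (ht := gap b r t) in *.
  apply (Rmult_le_reg_r St); [lra|].
  assert ((hs - ht) * St * (t ^ 2 + r ^ 2) <= 2 * hs * (INR b * t ^ e * (t ^ 2 - s ^ 2)) * (t ^ 2 + r ^ 2)).
  { apply Rmult_le_compat_r; [nra|].
    assert (2 * hs * (t ^ b - s ^ b) <= 2 * hs * (INR b * t ^ e * (t ^ 2 - s ^ 2)))
      by (apply Rmult_le_compat_l; lra). lra. }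
  assert (0 <= 2 * hs * INR b * (t ^ 2 - s ^ 2)) by (repeat apply Rmult_le_pos; lra).
  nra.
Qed.

Lemma pow_mul_gap_le s : 0 <= s ->
  s ^ e * gap (e + 2) r s * (s ^ 2 + r ^ 2) <= 2 * (r ^ (e + 2)) ^ 2.
Proof.
  intros Hs. set (b := (e + 2)%nat).
  assert (H1 := pow_mul_le_edge s Hs). fold b in H1.
  assert (Hm := gap_mul b r r_pos s Hs).
  destruct (gap_bounds b r r_pos s Hs) as [Hhs _].
  assert (0 <= s ^ b) by (apply pow_le; lra).
  assert (s ^ e * (s ^ 2 + r ^ 2) * gap b r s <= 2 * edge b r s * gap b r s)
    by (apply Rmult_le_compat_r; lra).
  nra.
Qed.

(* The decrease of [gap] against the weight [s^e] is controlled by the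
   increment of the bounded function [-1/(x^2+r^2)]: this keeps the total
   error independent of the mesh. *)
Lemma gap_weighted_decrease s t : 0 <= s <= t ->
  s ^ e * (gap (e + 2) r s - gap (e + 2) r t)
  <= 8 * INR (e + 2) * (r ^ (e + 2)) ^ 2 * (1 / (s ^ 2 + r ^ 2) - 1 / (t ^ 2 + r ^ 2)).
Proof.
  intros Hst.
  assert (H1 := gap_sub_mul_le s t Hst). assert (H2 := pow_mul_gap_le s ltac:(lra)).
  set (b := (e + 2)%nat) in *. set (hs := gap b r s) in *. set (ht := gap b r t) in *.
  assert (0 <= s ^ e) by (apply pow_le; lra).
  assert (0 <= INR b) by apply pos_INR. assert (0 <= t ^ 2 - s ^ 2) by nra.
  assert (Hs2 : 0 < s ^ 2 + r ^ 2) by nra. assert (Ht2 : 0 < t ^ 2 + r ^ 2) by nra.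
  replace (1 / (s ^ 2 + r ^ 2) - 1 / (t ^ 2 + r ^ 2))
    with ((t ^ 2 - s ^ 2) / ((s ^ 2 + r ^ 2) * (t ^ 2 + r ^ 2))) by (field; lra).
  apply (Rmult_le_reg_r ((s ^ 2 + r ^ 2) * (t ^ 2 + r ^ 2))); [nra|].
  replace (8 * INR b * (r ^ b) ^ 2 * ((t ^ 2 - s ^ 2) / ((s ^ 2 + r ^ 2) * (t ^ 2 + r ^ 2)))
           * ((s ^ 2 + r ^ 2) * (t ^ 2 + r ^ 2)))
    with (4 * INR b * (t ^ 2 - s ^ 2) * (2 * (r ^ b) ^ 2)) by (field; lra).
  assert (s ^ e * ((hs - ht) * (t ^ 2 + r ^ 2)) * (s ^ 2 + r ^ 2)
          <= s ^ e * (4 * INR b * hs * (t ^ 2 - s ^ 2)) * (s ^ 2 + r ^ 2)).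
  { apply Rmult_le_compat_r; [lra|]. apply Rmult_le_compat_l; lra. }
  assert (4 * INR b * (t ^ 2 - s ^ 2) * (s ^ e * hs * (s ^ 2 + r ^ 2))
          <= 4 * INR b * (t ^ 2 - s ^ 2) * (2 * (r ^ b) ^ 2))
    by (apply Rmult_le_compat_l; [nra | lra]).
  nra.
Qed.

End GapDecrease.

Lemma RInt_le_left_sum (w : R -> R) (y : nat -> R) (n : nat) (delta : R) :
  (forall x, 0 <= x -> continuous w x) ->
  (forall x x', 0 <= x <= x' -> w x <= w x') ->
  (forall k, (k <= n)%nat -> 0 <= y k) ->
  (forall k, (k < n)%nat -> y k <= y (S k) <= y k + delta) ->
  RInt w (y O) (y n)
  <= sumn_R n (fun k => (y (S k) - y k) * w (y k)) + delta * (w (y n) - w (y O)).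
Proof.
  intros Hcont Hmono Hy Hstep.
  assert (Hex : forall u v, 0 <= u -> 0 <= v -> ex_RInt w u v).
  { intros u v Hu Hv. apply (@ex_RInt_continuous R_CompleteNormedModule).
    intros z Hz. apply Hcont. assert (0 <= Rmin u v) by (apply Rmin_glb; lra). lra. }
  induction n as [|n IH].
  - simpl. rewrite RInt_point. unfold zero; simpl. lra.
  - assert (Hn : 0 <= y n) by (apply Hy; lia). assert (HSn : 0 <= y (S n)) by (apply Hy; lia).
    assert (Hs : y n <= y (S n) <= y n + delta) by (apply Hstep; lia).
    assert (IHn : RInt w (y O) (y n)
        <= sumn_R n (fun k => (y (S k) - y k) * w (y k)) + delta * (w (y n) - w (y O)))
      by (apply IH; intros; [apply Hy | apply Hstep]; lia).
    assert (Hlast : RInt w (y n) (y (S n)) <= (y (S n) - y n) * w (y (S n))).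
    { rewrite <- (RInt_const (V := R_CompleteNormedModule)).
      apply RInt_le; [lra | apply Hex; lra | apply ex_RInt_const |].
      intros x Hx. apply Hmono. lra. }
    assert (Hw : w (y n) <= w (y (S n))) by (apply Hmono; lra).
    assert ((y (S n) - y n) * (w (y (S n)) - w (y n)) <= delta * (w (y (S n)) - w (y n)))
      by (apply Rmult_le_compat_r; lra).
    rewrite <- (RInt_Chasles w (y O) (y n) (y (S n))) by (apply Hex; apply Hy; lia).
    simpl. unfold plus; simpl. lra.
Qed.

Definition speed (b : nat) (y : R) : R := sqrt (1 + (INR b / 2) ^ 2 * y ^ (b - 2)).

Lemma speed_le b y y' : 0 <= y <= y' -> speed b y <= speed b y'.
Proof.
  intros Hy. unfold speed. apply sqrt_le_1_alt.
  assert (y ^ (b - 2) <= y' ^ (b - 2)) by (apply pow_incr; lra).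
  assert (0 <= (INR b / 2) ^ 2) by apply pow2_ge_0. nra.
Qed.

Lemma speed_continuous b y : 0 <= y -> continuous (speed b) y.
Proof.
  intros Hy. apply (@ex_derive_continuous R_AbsRing R_NormedModule). unfold speed.
  auto_derive. assert (0 <= y ^ (b - 2)) by (apply pow_le; lra).
  assert (0 <= (INR b / 2) ^ 2) by apply pow2_ge_0. nra.
Qed.

Section Grid.
Variables (e N : nat) (th : R).
Hypotheses (N_pos : (1 <= N)%nat) (th_pos : 0 < th).

Definition mesh : R := th / INR N.
Definition node (k : nat) : R := INR k * mesh.
Definition rise (k : nat) : R := node (S k) ^ 2 - node k ^ 2.
Definition slope (k : nat) : R := (node (S k) ^ (e + 2) - node k ^ (e + 2)) / rise k.

Lemma mesh_pos : 0 < mesh.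
Proof. unfold mesh. apply Rdiv_lt_0_compat; [lra | apply lt_0_INR; lia]. Qed.

Lemma node_nonneg k : 0 <= node k.
Proof. unfold node. apply Rmult_le_pos; [apply pos_INR | apply Rlt_le, mesh_pos]. Qed.

Lemma node_S k : node (S k) = node k + mesh.
Proof. unfold node. rewrite S_INR. ring. Qed.

Lemma node_0 : node O = 0.
Proof. unfold node. simpl. ring. Qed.

Lemma node_N : node N = th.
Proof. unfold node, mesh. field. apply not_0_INR. lia. Qed.

Lemma node_le k : (k <= N)%nat -> node k <= th.
Proof.
  intros Hk. rewrite <- node_N. unfold node.
  apply Rmult_le_compat_r; [apply Rlt_le, mesh_pos | apply le_INR; exact Hk].
Qed.

Lemma rise_pos k : 0 < rise k.
Proof. unfold rise. rewrite node_S. pose proof (node_nonneg k). pose proof mesh_pos. nra. Qed.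

Lemma rise_le k : (k < N)%nat -> rise k <= 2 * th * mesh.
Proof.
  intros Hk. assert (Hle := node_le (S k) Hk). unfold rise. rewrite node_S in *.
  pose proof (node_nonneg k). pose proof mesh_pos. nra.
Qed.

Lemma slope_bounds k :
  INR (e + 2) / 2 * node k ^ e <= slope k <= INR (e + 2) / 2 * node (S k) ^ e.
Proof.
  assert (Hsec := pow_secant_bounds e (node k) (node (S k))
    ltac:(rewrite node_S; pose proof (node_nonneg k); pose proof mesh_pos; lra)).
  assert (Hr := rise_pos k). unfold slope. unfold rise in *.
  split; apply (Rmult_le_reg_r (node (S k) ^ 2 - node k ^ 2)); try lra;
    field_simplify; lra.
Qed.

Lemma slope_nonneg k : 0 <= slope k.
Proof.
  destruct (slope_bounds k) as [H _]. eapply Rle_trans; [|exact H].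
  apply Rmult_le_pos; [apply Rmult_le_pos; [apply pos_INR | lra] | apply pow_le, node_nonneg].
Qed.

Lemma slope_sine_bounds k :
  0 <= sin (atan (slope k)) <= INR (e + 2) / 2 * node (S k) ^ e.
Proof.
  destruct (sin_atan_bounds (slope k) (slope_nonneg k)). destruct (slope_bounds k). lra.
Qed.

Lemma slope_sine_le_S k : sin (atan (slope k)) <= sin (atan (slope (S k))).
Proof. apply sin_atan_le. destruct (slope_bounds k), (slope_bounds (S k)). lra. Qed.

Lemma speed_node k : speed (e + 2) (node k ^ 2) <= sqrt (1 + slope k ^ 2).
Proof.
  unfold speed. replace (e + 2 - 2)%nat with e by lia. apply sqrt_le_1_alt.
  destruct (slope_bounds k) as [H _].
  assert (0 <= INR (e + 2) / 2 * node k ^ e).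
  { apply Rmult_le_pos; [apply Rmult_le_pos; [apply pos_INR | lra] | apply pow_le, node_nonneg]. }
  assert ((INR (e + 2) / 2 * node k ^ e) ^ 2 <= slope k ^ 2) by (apply pow_incr; lra).
  replace ((node k ^ 2) ^ e) with ((node k ^ e) ^ 2) by (rewrite <- !pow_mult; f_equal; lia).
  nra.
Qed.

Lemma sum_rise_speed_ge :
  RInt (speed (e + 2)) 0 (th ^ 2) - 2 * th * mesh * (speed (e + 2) (th ^ 2) - speed (e + 2) 0)
  <= sumn_R N (fun k => rise k * speed (e + 2) (node k ^ 2)).
Proof.
  assert (H := RInt_le_left_sum (speed (e + 2)) (fun k => node k ^ 2) N (2 * th * mesh)
    (speed_continuous _) (speed_le _)).
  cbv beta in H. rewrite node_0, node_N, pow_i in H by lia. fold rise in H.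
  enough (RInt (speed (e + 2)) 0 (th ^ 2) <= sumn_R N (fun k => rise k * speed (e + 2) (node k ^ 2))
     + 2 * th * mesh * (speed (e + 2) (th ^ 2) - speed (e + 2) 0)) by lra.
  apply H.
  - intros k _. apply pow2_ge_0.
  - intros k Hk. pose proof (rise_pos k). pose proof (rise_le k Hk). unfold rise in *. lra.
Qed.

Variable r : R.
Hypothesis r_pos : 0 < r.

Lemma gap_node_step k : (k < N)%nat ->
  0 <= gap (e + 2) r (node k) - gap (e + 2) r (node (S k))
    <= INR (e + 2) * th ^ (e + 1) * mesh.
Proof.
  intros Hk. assert (Hle := node_le (S k) Hk). pose proof (node_nonneg k). pose proof mesh_pos.
  assert (Hkk : 0 <= node k <= node (S k)) by (rewrite node_S; lra).
  split; [pose proof (gap_le (e + 2) r r_pos _ _ Hkk); lra|].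
  eapply Rle_trans; [apply (gap_sub_le (e + 2) r _ _ Hkk)|].
  replace (e + 2)%nat with (S (S e)) by lia.
  eapply Rle_trans; [apply (pow_sub_le_mean (S e) _ _ Hkk)|].
  rewrite node_S in *. replace (node k + mesh - node k) with mesh by ring.
  apply Rmult_le_compat_r; [lra|]. apply Rmult_le_compat_l; [apply pos_INR|].
  replace (e + 1)%nat with (S e) by lia. apply pow_incr; lra.
Qed.

Definition gap_potential (x : R) : R :=
  - (8 * INR (e + 2) * (r ^ (e + 2)) ^ 2) * (1 / (x ^ 2 + r ^ 2)).

Lemma gap_decrease_term_le k : (k < N)%nat ->
  sin (atan (slope k)) * (gap (e + 2) r (node k) - gap (e + 2) r (node (S k)))
  <= INR (e + 2) / 2 * (gap_potential (node (S k)) - gap_potential (node k))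
     + INR (e + 2) / 2 * (INR (e + 2) * th ^ (e + 1) * mesh) * (node (S k) ^ e - node k ^ e).
Proof.
  intros Hk.
  set (q := INR (e + 2) / 2). set (B := INR (e + 2) * th ^ (e + 1) * mesh).
  assert (Hq : 0 < q) by (unfold q; assert (0 < INR (e + 2)) by (apply lt_0_INR; lia); lra).
  destruct (gap_node_step k Hk) as [Hd0 HdB]. fold B in HdB.
  destruct (slope_sine_bounds k) as [Hs0 Hs1]. fold q in Hs1.
  assert (Hkk : 0 <= node k <= node (S k))
    by (rewrite node_S; pose proof (node_nonneg k); pose proof mesh_pos; lra).
  assert (HV := gap_weighted_decrease e r r_pos _ _ Hkk).
  assert (Hpow : 0 <= node k ^ e <= node (S k) ^ e) by (split; [apply pow_le | apply pow_incr]; lra).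
  set (d := gap (e + 2) r (node k) - gap (e + 2) r (node (S k))) in *.
  (* Split the weight [q node(k+1)^e] as [q node(k)^e] plus its increment. *)
  assert (sin (atan (slope k)) * d <= q * node (S k) ^ e * d) by (apply Rmult_le_compat_r; lra).
  assert (q * (node (S k) ^ e - node k ^ e) * d <= q * (node (S k) ^ e - node k ^ e) * B)
    by (apply Rmult_le_compat_l; [apply Rmult_le_pos|]; lra).
  assert (q * (node k ^ e * d) <= q * (gap_potential (node (S k)) - gap_potential (node k))).
  { apply Rmult_le_compat_l; [lra|].
    replace (gap_potential (node (S k)) - gap_potential (node k)) with (8 * INR (e + 2) * (r ^ (e + 2)) ^ 2
      * (1 / (node k ^ 2 + r ^ 2) - 1 / (node (S k) ^ 2 + r ^ 2))) by (unfold gap_potential; ring).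
    exact HV. }
  nra.
Qed.

Lemma sum_gap_decrease_le :
  sumn_R N (fun k => sin (atan (slope k)) * (gap (e + 2) r (node k) - gap (e + 2) r (node (S k))))
  <= INR (e + 2) / 2 * (8 * INR (e + 2) * (r ^ (e + 2)) ^ 2 / r ^ 2)
     + INR (e + 2) / 2 * INR (e + 2) * th ^ (2 * e + 1) * mesh.
Proof.
  eapply Rle_trans; [apply sumn_R_le; exact gap_decrease_term_le|].
  set (q := INR (e + 2) / 2). set (B := INR (e + 2) * th ^ (e + 1) * mesh).
  assert (Hq : 0 < q) by (unfold q; assert (0 < INR (e + 2)) by (apply lt_0_INR; lia); lra).
  rewrite sumn_R_plus, !sumn_R_scal, (sumn_R_telescope N (fun k => gap_potential (node k))),
    (sumn_R_telescope N (fun k => node k ^ e)), node_N, node_0.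
  assert (HW : gap_potential th - gap_potential 0 <= 8 * INR (e + 2) * (r ^ (e + 2)) ^ 2 / r ^ 2).
  { unfold gap_potential. assert (0 < r ^ 2) by (apply pow_lt; lra).
    assert (0 <= 8 * INR (e + 2) * (r ^ (e + 2)) ^ 2)
      by (apply Rmult_le_pos; [pose proof (pos_INR (e + 2)); lra | apply pow2_ge_0]).
    assert (0 <= 1 / (th ^ 2 + r ^ 2)) by (apply Rlt_le, Rdiv_lt_0_compat; nra).
    replace (0 ^ 2 + r ^ 2) with (r ^ 2) by ring. unfold Rdiv. nra. }
  assert (HB : 0 <= q * B) by (unfold B; apply Rmult_le_pos; [lra|];
    apply Rmult_le_pos; [apply Rmult_le_pos; [apply pos_INR | apply pow_le; lra] | apply Rlt_le, mesh_pos]).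
  assert (0 <= 0 ^ e) by (apply pow_le; lra).
  replace (q * INR (e + 2) * th ^ (2 * e + 1) * mesh) with (q * B * th ^ e)
    by (unfold B; replace (2 * e + 1)%nat with (e + 1 + e)%nat by lia;
        rewrite (pow_add th (e + 1) e); ring).
  assert (q * (gap_potential th - gap_potential 0) <= q * (8 * INR (e + 2) * (r ^ (e + 2)) ^ 2 / r ^ 2))
    by (apply Rmult_le_compat_l; lra).
  assert (0 <= q * B * 0 ^ e) by (apply Rmult_le_pos; lra).
  lra.
Qed.

Variable a : nat -> R.

Definition slack (k : nat) : R := edge (e + 2) r (node k) - a k.

(* Tangent-line bound at the slope of [x1 = x2^(b/2)] on the k-th strip; the
   deviation of the chord from that slope splits into the change of [gap] and
   the change of [slack]. *)
Lemma chord_ge k :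
  rise k * speed (e + 2) (node k ^ 2)
  - sin (atan (slope k)) * (gap (e + 2) r (node k) - gap (e + 2) r (node (S k)))
  + sin (atan (slope k)) * (slack k - slack (S k))
  <= sqrt ((a (S k) - a k) ^ 2 + rise k ^ 2).
Proof.
  assert (Hr := rise_pos k).
  assert (Ht := sqrt_ge_tangent (rise k) (a (S k) - a k) (slope k)).
  replace (a (S k) - a k - slope k * rise k)
    with (- (gap (e + 2) r (node k) - gap (e + 2) r (node (S k))) + (slack k - slack (S k))) in Ht
    by (unfold slope, slack, gap; field; lra).
  assert (rise k * speed (e + 2) (node k ^ 2) <= rise k * sqrt (1 + slope k ^ 2))
    by (apply Rmult_le_compat_l; [lra | apply speed_node]).
  lra.
Qed.

Hypothesis a_range : forall k, (k <= N)%nat -> 0 <= a k <= edge (e + 2) r (node k).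
Hypothesis a_N : a N = th ^ (e + 2).

Lemma sum_slack_ge :
  - (INR (e + 2) / 2 * ((r ^ (e + 2)) ^ 2 / th ^ 2))
  <= sumn_R N (fun k => sin (atan (slope k)) * (slack k - slack (S k))).
Proof.
  assert (HN : N = S (pred N)) by lia.
  assert (Habel := sumn_R_abel_ge (pred N) (fun k => sin (atan (slope k))) slack).
  rewrite <- HN in Habel.
  assert (Hlast : 0 <= slack N <= (r ^ (e + 2)) ^ 2 / th ^ (e + 2)).
  { unfold slack. rewrite a_N, node_N. fold (gap (e + 2) r th).
    assert (Hth : 0 < th ^ (e + 2)) by (apply pow_lt; lra).
    assert (Hm := gap_mul (e + 2) r r_pos th ltac:(lra)).
    destruct (gap_bounds (e + 2) r r_pos th) as [Hg _]; [lra|].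
    destruct (edge_facts (e + 2) r r_pos th) as [He _]; [lra|].
    split; [exact Hg|]. apply (Rmult_le_reg_r (th ^ (e + 2))); [exact Hth|].
    unfold Rdiv. rewrite Rmult_assoc, Rinv_l, Rmult_1_r by lra. nra. }
  assert (Hsg : sin (atan (slope (pred N))) <= INR (e + 2) / 2 * th ^ e).
  { destruct (slope_sine_bounds (pred N)) as [_ H]. rewrite <- HN, node_N in H. exact H. }
  assert (Hsg0 : 0 <= sin (atan (slope (pred N)))) by apply slope_sine_bounds.
  assert (Hmul : sin (atan (slope (pred N))) * slack N
                 <= INR (e + 2) / 2 * th ^ e * ((r ^ (e + 2)) ^ 2 / th ^ (e + 2)))
    by (apply Rmult_le_compat; lra).
  replace (INR (e + 2) / 2 * th ^ e * ((r ^ (e + 2)) ^ 2 / th ^ (e + 2)))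
    with (INR (e + 2) / 2 * ((r ^ (e + 2)) ^ 2 / th ^ 2)) in Hmul
    by (rewrite (pow_add th e 2); field; split; [lra | apply pow_nonzero; lra]).
  enough (- (sin (atan (slope (pred N))) * slack N)
          <= sumn_R N (fun k => sin (atan (slope k)) * (slack k - slack (S k)))) by lra.
  apply Habel.
  - intros k _. apply slope_sine_bounds.
  - intros k _. apply slope_sine_le_S.
  - intros k Hk. unfold slack. destruct (a_range k); [lia | lra].
Qed.

Lemma sum_chord_ge :
  RInt (speed (e + 2)) 0 (th ^ 2)
  - (mesh * (2 * th * (speed (e + 2) (th ^ 2) - speed (e + 2) 0)
             + INR (e + 2) / 2 * INR (e + 2) * th ^ (2 * e + 1))
     + INR (e + 2) / 2 * (8 * INR (e + 2) * (r ^ (e + 2)) ^ 2 / r ^ 2)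
     + INR (e + 2) / 2 * ((r ^ (e + 2)) ^ 2 / th ^ 2))
  <= sumn_R N (fun k => sqrt ((a (S k) - a k) ^ 2 + rise k ^ 2)).
Proof.
  eapply Rle_trans; [|apply sumn_R_le; intros k _; apply chord_ge].
  rewrite sumn_R_plus, sumn_R_minus.
  pose proof sum_rise_speed_ge. pose proof sum_gap_decrease_le. pose proof sum_slack_ge.
  lra.
Qed.

End Grid.

Definition clamp01 (x : R) : R := Rmax 0 (Rmin 1 x).

Lemma clamp01_bounds x : 0 <= clamp01 x <= 1.
Proof. unfold clamp01, Rmax, Rmin. repeat destruct Rle_dec; lra. Qed.

Lemma clamp01_id x : 0 <= x <= 1 -> clamp01 x = x.
Proof. intros. unfold clamp01, Rmax, Rmin. repeat destruct Rle_dec; lra. Qed.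

Lemma clamp01_lipschitz x y : Rabs (clamp01 x - clamp01 y) <= Rabs (x - y).
Proof. unfold clamp01, Rmax, Rmin. repeat destruct Rle_dec; unfold Rabs; repeat destruct Rcase_abs; lra. Qed.

Lemma dist2_sym x y : dist2 x y = dist2 y x.
Proof. unfold dist2. f_equal. ring. Qed.

Lemma Rabs_snd_le_dist2 x y : Rabs (snd x - snd y) <= dist2 x y.
Proof.
  unfold dist2. rewrite <- sqrt_Rsqr_abs. apply sqrt_le_1_alt. unfold Rsqr.
  assert (0 <= (fst x - fst y) ^ 2) by apply pow2_ge_0. nra.
Qed.

Lemma abs_cont01_dist2_lt nu eps : abs_cont01 nu -> 0 < eps ->
  exists delta, 0 < delta /\
    forall u v, 0 <= u <= 1 -> 0 <= v <= 1 -> Rabs (u - v) < delta -> dist2 (nu u) (nu v) < eps.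
Proof.
  intros Hac Heps. destruct (Hac eps Heps) as [delta [Hd Hdel]].
  exists delta. split; [exact Hd|]. intros u v Hu Hv Huv.
  destruct (Rle_dec v u).
  - specialize (Hdel 1%nat (fun _ => v) (fun _ => u)). simpl in Hdel.
    rewrite Rabs_right in Huv by lra.
    enough (0 + dist2 (nu u) (nu v) < eps) by lra.
    apply Hdel; [intros; lra | intros; lia | lra].
  - specialize (Hdel 1%nat (fun _ => u) (fun _ => v)). simpl in Hdel.
    rewrite Rabs_left in Huv by lra. rewrite dist2_sym.
    enough (0 + dist2 (nu v) (nu u) < eps) by lra.
    apply Hdel; [intros; lra | intros; lia | lra].
Qed.

Lemma abs_cont01_snd_continuity nu : abs_cont01 nu -> continuity (fun x => snd (nu (clamp01 x))).
Proof.
  intros Hac x eps Heps.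
  destruct (abs_cont01_dist2_lt nu eps Hac Heps) as [delta [Hd Hdel]].
  exists delta. split; [exact Hd|]. intros x' [_ Hx']. simpl in *. unfold R_dist in *.
  eapply Rle_lt_trans; [apply Rabs_snd_le_dist2|].
  apply Hdel; try apply clamp01_bounds.
  eapply Rle_lt_trans; [apply clamp01_lipschitz | exact Hx'].
Qed.

(* The times are chosen from the last level backwards, each by the intermediate
   value theorem on [[0, T (S k)]]. *)
Lemma ivt_times (G : R -> R) (N : nat) (y : nat -> R) :
  continuity (fun x => G (clamp01 x)) ->
  (forall k, G 0 <= y k) -> (forall k, y k <= y (S k)) -> G 1 = y N ->
  exists T : nat -> R, T N = 1 /\
    (forall k, (k <= N)%nat -> 0 <= T k <= 1 /\ G (T k) = y k) /\
    (forall k, (k < N)%nat -> T k <= T (S k)).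
Proof.
  intros Hc H0 Hinc H1.
  assert (Hj : forall j, (j <= N)%nat -> exists T : nat -> R, T N = 1 /\
     (forall k, (N - j <= k <= N)%nat -> 0 <= T k <= 1 /\ G (T k) = y k) /\
     (forall k, (N - j <= k < N)%nat -> T k <= T (S k))).
  { induction j as [|j IH]; intros Hj.
    - exists (fun _ => 1). split; [reflexivity|]. split.
      + intros k Hk. replace k with N by lia. split; [lra | exact H1].
      + intros; lia.
    - destruct IH as [T [HT1 [HT2 HT3]]]; [lia|].
      set (k0 := (N - S j)%nat). set (u := T (S k0)).
      assert (Hu : 0 <= u <= 1 /\ G u = y (S k0)) by (apply HT2; unfold k0; lia).
      destruct (IVT_cor (fun x => G (clamp01 x) - y k0) 0 u) as [z [Hz1 Hz2]].
      + apply continuity_minus; [exact Hc | apply continuity_const; intros ? ?; reflexivity].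
      + lra.
      + rewrite !clamp01_id by lra. pose proof (H0 k0). pose proof (Hinc k0).
        assert (G 0 - y k0 <= 0) by lra. assert (0 <= G u - y k0) by lra. nra.
      + rewrite clamp01_id in Hz2 by lra.
        exists (fun k => if Nat.eqb k k0 then z else T k). split; [|split].
        * destruct (Nat.eqb_spec N k0); [unfold k0 in *; lia | exact HT1].
        * intros k Hk. destruct (Nat.eqb_spec k k0) as [->|].
          -- split; lra.
          -- apply HT2. unfold k0 in *. lia.
        * intros k Hk. destruct (Nat.eqb_spec k k0), (Nat.eqb_spec (S k) k0); try lia.
          -- subst k. fold u. lra.
          -- apply HT3. unfold k0 in *. lia. }
  destruct (Hj N (le_n N)) as [T [HT1 [HT2 HT3]]]. exists T. split; [exact HT1|split].
  - intros k Hk. apply HT2. lia.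
  - intros k Hk. apply HT3. lia.
Qed.

Lemma inscribed_length_times (nu : R -> R * R) (N : nat) (T : nat -> R) :
  0 <= T O -> T N = 1 -> (forall k, (k < N)%nat -> T k <= T (S k)) ->
  inscribed_length nu
    (dist2 (nu (T O)) (nu 0) + sumn_R N (fun k => dist2 (nu (T (S k))) (nu (T k)))).
Proof.
  intros H0 HN Hmono.
  exists (S N), (fun i => match i with O => 0 | S k => T k end).
  split; [reflexivity|]. split; [exact HN|]. split.
  - intros [|k] Hk; [exact H0 | apply Hmono; lia].
  - rewrite sumn_R_shift. reflexivity.
Qed.

Lemma Dz_fst_le_edge b r x p : 0 < r -> 0 <= x -> snd p = x ^ 2 ->
  Dz b ((r ^ b) ^ 2) p -> 0 <= fst p <= edge b r x.
Proof.
  intros Hr Hx Hp [Hf HPt]. split; [exact Hf|].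
  unfold Pt in HPt. rewrite Hp in HPt.
  destruct (Rle_dec 0 (x ^ 2)) as [_|Hn]; [|exfalso; apply Hn, pow2_ge_0].
  unfold edge. rewrite <- (sqrt_pow2 (fst p)) by exact Hf. apply sqrt_le_1_alt.
  replace ((x ^ b) ^ 2) with ((x ^ 2) ^ b) by (rewrite <- !pow_mult; f_equal; lia). lra.
Qed.

Lemma curve_length_ge_grid (e N : nat) (th r s : R) (nu : R -> R * R) :
  (1 <= N)%nat -> 0 < th -> 0 < r -> 0 <= s ->
  abs_cont01 nu -> nu 0 = (0, - s) -> nu 1 = (th ^ (e + 2), th ^ 2) ->
  (forall t, 0 <= t <= 1 -> Dz (e + 2) ((r ^ (e + 2)) ^ 2) (nu t)) ->
  Rbar_le (s + RInt (speed (e + 2)) 0 (th ^ 2)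
             - (mesh N th * (2 * th * (speed (e + 2) (th ^ 2) - speed (e + 2) 0)
                             + INR (e + 2) / 2 * INR (e + 2) * th ^ (2 * e + 1))
                + INR (e + 2) / 2 * (8 * INR (e + 2) * (r ^ (e + 2)) ^ 2 / r ^ 2)
                + INR (e + 2) / 2 * ((r ^ (e + 2)) ^ 2 / th ^ 2)))
          (curve_length nu).
Proof.
  intros HN Hth Hr Hs Hac Hnu0 Hnu1 HD.
  destruct (ivt_times (fun t => snd (nu t)) N (fun k => node N th k ^ 2)) as [T [HT1 [HT2 HT3]]].
  - apply abs_cont01_snd_continuity, Hac.
  - intros k. rewrite Hnu0. simpl. pose proof (pow2_ge_0 (node N th k)). lra.
  - intros k. apply pow_incr. rewrite node_S. pose proof (node_nonneg N th HN Hth k).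
    pose proof (mesh_pos N th HN Hth). lra.
  - rewrite Hnu1, node_N by lia. reflexivity.
  - set (a := fun k => fst (nu (T k))).
    assert (Hsnd : forall k, (k <= N)%nat -> snd (nu (T k)) = node N th k ^ 2) by apply HT2.
    assert (Hchords := sum_chord_ge e N th HN Hth r Hr a).
    specialize (Hchords ltac:(intros k Hk; destruct (HT2 k Hk) as [HTk Hk2];
      apply (Dz_fst_le_edge _ _ _ _ Hr (node_nonneg N th HN Hth k) Hk2), HD, HTk)).
    specialize (Hchords ltac:(unfold a; rewrite HT1, Hnu1; reflexivity)).
    assert (Hfirst : s <= dist2 (nu (T O)) (nu 0)).
    { eapply Rle_trans; [|apply Rabs_snd_le_dist2]. rewrite Hsnd, node_0, Hnu0 by lia. simpl.
      rewrite Rabs_right; lra. }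
    assert (Hsum : sumn_R N (fun k => dist2 (nu (T (S k))) (nu (T k)))
                   = sumn_R N (fun k => sqrt ((a (S k) - a k) ^ 2 + rise N th k ^ 2))).
    { apply sumn_R_ext. intros k Hk. unfold dist2, rise. rewrite !Hsnd by lia. reflexivity. }
    eapply Rbar_le_trans;
      [|apply (proj1 (Lub_Rbar_correct (inscribed_length nu))), inscribed_length_times; eauto].
    + unfold Rbar_le. rewrite Hsum. lra.
    + apply HT2. lia.
Qed.

Lemma exists_mesh_le th A M : 0 < th -> 0 <= A -> 0 < M ->
  exists N, (1 <= N)%nat /\ mesh N th * A <= M.
Proof.
  intros Hth HA HM.
  destruct (archimed_cor1 (M / (th * (A + 1)))) as [N [HN1 HN2]].
  { apply Rdiv_lt_0_compat; nra. }
  exists N. split; [lia|].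
  assert (HNp : 0 < INR N) by (apply lt_0_INR; lia).
  unfold mesh. apply Rle_trans with (th * (A + 1) * / INR N).
  - unfold Rdiv. assert (0 < / INR N) by (apply Rinv_0_lt_compat; lra). nra.
  - apply (Rmult_le_reg_r (/ (th * (A + 1)))); [apply Rinv_0_lt_compat; nra|].
    replace (th * (A + 1) * / INR N * / (th * (A + 1))) with (/ INR N) by (field; lra).
    unfold Rdiv in HN1. lra.
Qed.

(* The constant [K] of the theorem: the mesh error is made smaller than
   [zeta^(1 - 1/b) = (r^b)^2 / r^2], and the hypothesis [r^2 <= (1 + C) th^2]
   absorbs the boundary term of the summation by parts. *)
Lemma curve_length_ge (e : nat) (C th r s : R) (nu : R -> R * R) :
  0 < C -> 0 < th -> 0 < r -> r ^ 2 <= (1 + C) * th ^ 2 -> 0 <= s ->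
  abs_cont01 nu -> nu 0 = (0, - s) -> nu 1 = (th ^ (e + 2), th ^ 2) ->
  (forall t, 0 <= t <= 1 -> Dz (e + 2) ((r ^ (e + 2)) ^ 2) (nu t)) ->
  Rbar_le (s + RInt (speed (e + 2)) 0 (th ^ 2)
             - (1 + INR (e + 2) / 2 * (8 * INR (e + 2) + 1 + C)) * ((r ^ (e + 2)) ^ 2 / r ^ 2))
          (curve_length nu).
Proof.
  intros HC Hth Hr Hrth Hs Hac Hnu0 Hnu1 HD.
  set (q := INR (e + 2) / 2). set (P := (r ^ (e + 2)) ^ 2).
  assert (Hq : 0 < q) by (unfold q; assert (0 < INR (e + 2)) by (apply lt_0_INR; lia); lra).
  assert (HP : 0 < P) by (unfold P; apply pow_lt, pow_lt, Hr).
  assert (Hr2 : 0 < r ^ 2) by (apply pow_lt, Hr).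
  set (A := 2 * th * (speed (e + 2) (th ^ 2) - speed (e + 2) 0) + q * INR (e + 2) * th ^ (2 * e + 1)).
  assert (HA : 0 <= A).
  { unfold A. assert (speed (e + 2) 0 <= speed (e + 2) (th ^ 2)) by (apply speed_le; nra).
    assert (0 <= q * INR (e + 2) * th ^ (2 * e + 1))
      by (apply Rmult_le_pos; [apply Rmult_le_pos; [lra | apply pos_INR] | apply pow_le; lra]).
    nra. }
  destruct (exists_mesh_le th A (P / r ^ 2) Hth HA ltac:(apply Rdiv_lt_0_compat; lra)) as [N [HN Hmesh]].
  eapply Rbar_le_trans; [|exact (curve_length_ge_grid e N th r s nu HN Hth Hr Hs Hac Hnu0 Hnu1 HD)].
  fold q P. fold A. unfold Rbar_le.
  assert (Hboundary : P / th ^ 2 <= (1 + C) * (P / r ^ 2)).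
  { apply (Rmult_le_reg_r (th ^ 2 * r ^ 2)); [nra|].
    replace (P / th ^ 2 * (th ^ 2 * r ^ 2)) with (P * r ^ 2) by (field; nra).
    replace ((1 + C) * (P / r ^ 2) * (th ^ 2 * r ^ 2)) with (P * ((1 + C) * th ^ 2)) by (field; nra).
    apply Rmult_le_compat_l; lra. }
  assert (q * (P / th ^ 2) <= q * ((1 + C) * (P / r ^ 2))) by (apply Rmult_le_compat_l; lra).
  replace (8 * INR (e + 2) * P / r ^ 2) with (8 * INR (e + 2) * (P / r ^ 2)) by (field; lra).
  lra.
Qed.

Lemma LSR_speed b s eps : LSR b s eps = s + RInt (speed b) 0 eps.
Proof. reflexivity. Qed.

Lemma Rpower_half_pow b eps : 0 < eps -> Rpower eps (INR b / 2) = sqrt eps ^ b.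
Proof.
  intros Heps. replace (INR b / 2) with (/ 2 * INR b) by field.
  rewrite <- Rpower_mult, Rpower_sqrt by exact Heps.
  apply Rpower_pow, sqrt_lt_R0, Heps.
Qed.

Lemma Rpower_root_pow b z : (1 <= b)%nat -> 0 < z ->
  (Rpower z (/ (2 * INR b)) ^ b) ^ 2 = z.
Proof.
  intros Hb Hz. assert (0 < INR b) by (apply lt_0_INR; lia).
  rewrite <- pow_mult, <- Rpower_pow by (apply exp_pos).
  rewrite Rpower_mult, mult_INR. simpl INR.
  replace (/ (2 * INR b) * (INR b * (1 + 1))) with 1 by (field; lra).
  apply Rpower_1, Hz.
Qed.

Lemma Rpower_one_sub_inv b z : (1 <= b)%nat -> 0 < z ->
  Rpower z (1 - 1 / INR b)
  = (Rpower z (/ (2 * INR b)) ^ b) ^ 2 / Rpower z (/ (2 * INR b)) ^ 2.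
Proof.
  intros Hb Hz. assert (0 < INR b) by (apply lt_0_INR; lia).
  rewrite Rpower_root_pow by assumption.
  rewrite <- Rpower_pow, Rpower_mult by (apply exp_pos).
  replace (/ (2 * INR b) * INR 2) with (1 / INR b) by (simpl; field; lra).
  assert (0 < Rpower z (1 / INR b)) by apply exp_pos.
  apply (Rmult_eq_reg_r (Rpower z (1 / INR b))); [|lra].
  rewrite <- Rpower_plus. replace (1 - 1 / INR b + 1 / INR b) with 1 by ring.
  rewrite Rpower_1 by exact Hz. field. lra.
Qed.

Lemma Rpower_le_pow_lt_1 eps x n : 0 < eps < 1 -> INR n <= x -> Rpower eps x <= eps ^ n.
Proof.
  intros Heps Hx. rewrite <- Rpower_pow by lra. unfold Rpower.
  assert (ln eps < 0) by (rewrite <- ln_1; apply ln_increasing; lra).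
  assert (Hle : x * ln eps <= INR n * ln eps) by nra.
  destruct (Rle_lt_or_eq_dec _ _ Hle) as [Hlt | ->]; [apply Rlt_le, exp_increasing, Hlt | lra].
Qed.

Lemma pow_le_mul_pow_le u v C n : 0 <= u -> 0 < v -> 0 < C -> (1 <= n)%nat ->
  u ^ n <= C * v ^ n -> u <= (1 + C) * v.
Proof.
  intros Hu Hv HC Hn Hle. destruct (Rle_dec u ((1 + C) * v)) as [|Hgt]; [assumption|].
  exfalso.
  assert (H1 : ((1 + C) * v) ^ n <= u ^ n) by (apply pow_incr; split; [nra | lra]).
  rewrite Rpow_mult_distr in H1.
  assert (H2 : (1 + C) ^ 1 <= (1 + C) ^ n) by (apply Rle_pow; [lra | lia]).
  assert (H3 : 0 < v ^ n) by (apply pow_lt, Hv).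
  simpl in H2. nra.
Qed.

Theorem mainTheorem8 :
  forall (b : nat), Nat.Odd b -> (5 <= b)%nat ->
  let q := INR b / 2 in
  forall C : R, 0 < C ->
  exists K eps0 : R, 0 < K /\ 0 < eps0 /\
    forall eps zeta s : R,
      0 < eps -> eps < eps0 ->
      0 < zeta -> zeta <= C * Rpower eps (3 * q - 1) ->
      0 <= s ->
      forall nu : R -> R * R,
        abs_cont01 nu ->
        nu 0 = (0, - s) ->
        nu 1 = (Rpower eps q, eps) ->
        (forall t, 0 <= t <= 1 -> Dz b zeta (nu t)) ->
        Rbar_le (Finite (LSR b s eps - K * Rpower zeta (1 - 1 / INR b)))
                (curve_length nu).
Proof.
  intros b _ Hb q C HC.
  destruct (Nat.le_exists_sub 2 b) as [e [-> _]]; [lia|].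
  assert (Hq : 0 < q) by (unfold q; assert (0 < INR (e + 2)) by (apply lt_0_INR; lia); lra).
  exists (1 + q * (8 * INR (e + 2) + 1 + C)), 1.
  split; [assert (0 <= INR (e + 2)) by apply pos_INR; nra | split; [lra|]].
  intros eps zeta s Heps Heps1 Hz Hzc Hs nu Hac Hnu0 Hnu1 HD.
  set (th := sqrt eps). set (r := Rpower zeta (/ (2 * INR (e + 2)))).
  assert (Hth : 0 < th) by (apply sqrt_lt_R0, Heps).
  assert (Hth2 : th ^ 2 = eps) by (unfold th; rewrite <- Rsqr_pow2; apply Rsqr_sqrt; lra).
  assert (Hr : 0 < r) by apply exp_pos.
  assert (Hroot : (r ^ (e + 2)) ^ 2 = zeta) by (apply Rpower_root_pow; [lia | exact Hz]).
  assert (Hrth : r ^ 2 <= (1 + C) * th ^ 2).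
  { rewrite Hth2. apply (pow_le_mul_pow_le _ _ _ (e + 2)); try lra; [apply pow2_ge_0 | lia |].
    rewrite <- pow_mult, Nat.mul_comm, pow_mult, Hroot.
    eapply Rle_trans; [exact Hzc|]. apply Rmult_le_compat_l; [lra|].
    apply Rpower_le_pow_lt_1; [lra|]. unfold q. rewrite plus_INR. simpl. pose proof (pos_INR e). lra. }
  unfold q in Hnu1. rewrite Rpower_half_pow in Hnu1 by exact Heps. fold th in Hnu1. rewrite <- Hth2 in Hnu1.
  rewrite <- Hroot in HD.
  rewrite LSR_speed, Rpower_one_sub_inv by (lia || exact Hz). fold r. rewrite <- Hth2.
  apply curve_length_ge; assumption.
Qed.
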